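(* Let $q$ be a prime power, $N=q^2-1$, $\alpha\in\mathbb{F}_{q^2}$ with $\mathbb{F}_{q^2}=\mathbb{F}_q(\alpha)$, $g$ a primitive root of $\mathbb{F}_{q^2}$, and $M=\{\log_g(t-\alpha):t\in\mathbb{F}_q\}$ (so $0\notin M$ and $|M|=q$). Let $$\Phi=\frac{1}{\sqrt{q+1}}\mathcal{F}^{(N)}_{M\cup\{0\}}\in\mathbb{C}^{(q+1)\times(q^2-1)},$$ with columns $\Phi_0,\dots,\Phi_{N-1}$, and for $j=0,\dots,q-2$ let $T_j=\{j+k(q-1):0\le k\le q\}$. Then: (1) for each $0\le j\le q-2$, the $(q+1)\times(q+1)$ submatrix $\Phi_{T_j}$ (columns indexed by $T_j$) is unitary, i.e. its columns form an orthonormal basis of $\mathbb{C}^{q+1}$; (2) for $k_1\in T_{j_1}$, $k_2\in T_{j_2}$ with $j_1\neq j_2$, $$\frac{\sqrt q-1}{q+1}\le|\langle\Phi_{k_1},\Phi_{k_2}\rangle|\le\frac{\sqrt q+1}{q+1}.$$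
   Context: $\log_g u$ for $u\in\mathbb{F}_{q^2}^*$ is the unique integer $m$ with $0\le m<q^2-1$ and $g^m=u$. $\mathcal{F}^{(N)}$ is the $N\times N$ Fourier matrix with $(k,j)$ entry $e^{2\pi i kj/N}$, $0\le k,j\le N-1$; for $M'\subset\{0,\dots,N-1\}$, $\mathcal{F}^{(N)}_{M'}$ is the submatrix of rows with indices in $M'$. $\langle u,v\rangle=\sum_r u_r\overline{v_r}$. *)

From HB Require Import structures.
From mathcomp Require Import all_boot all_order all_algebra all_field.
Set Implicit Arguments. Unset Strict Implicit. Unset Printing Implicit Defensive.
Import Order.TTheory GRing.Theory Num.Theory.
Local Open Scope ring_scope.

Definition logg (F : finFieldType) (g u : F) : nat :=
  if [pick m : 'I_(#|F|.-1) | g ^+ m == u] is Some m then val m else 0%N.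

(* exp(2 pi i / N): N.-root (-1) is exp(i pi / N) (minimal argument root). *)
Definition omega (N : nat) : algC := (N.-root (-1)) ^+ 2.

Definition fourier (N k j : nat) : algC := omega N ^+ (k * j).

Definition Phi (N q : nat) (r c : nat) : algC :=
  (sqrtC (q.+1)%:R)^-1 * fourier N r c.

Definition ip (N q : nat) (S : pred nat) (k1 k2 : nat) : algC :=
  \sum_(r < N | S r) Phi N q r k1 * (Phi N q r k2)^*.

Definition T (q j : nat) : pred nat :=
  fun k => [exists m : 'I_q.+1, k == (j + m * q.-1)%N].

From HB Require Import structures.
From mathcomp Require Import all_boot all_order all_algebra all_field.
From mathcomp Require Import ring zify.
Import Order.TTheory GRing.Theory Num.Theory.
Local Open Scope ring_scope.

Set Implicit Arguments. Unset Strict Implicit. Unset Printing Implicit Defensive.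

(* Write w = omega N and, for column indices a, b, let
     chi_ab(x) = w^(a log_g x) * conj (w^(b log_g x)),
   a multiplicative character of F^* = F_{q^2}^*.  Since the rows of Phi are
   0 and log_g (t - alpha), t in K = F_q, each Gram entry is a character sum
     <Phi_a, Phi_b> = (1 + S_ab) / (q + 1),  S_ab = sum_(t in K) chi_ab (t - alpha).
   (1) In one block T_j we have a = b mod (q - 1), so chi_ab is trivial on K^*;
       as F^* is the disjoint union of the q + 1 cosets K^* and
       K^* (t - alpha), summing chi_ab over F^* gives (q - 1)(1 + S_ab) = 0
       whenever a != b.
   (2) Across blocks chi_ab is nontrivial at g^(q+1), which lies in K^*; then
       chi_ab sums to 0 over F \ K, and since every element of F \ K is
       uniquely (t - alpha)/(s - alpha) with t != s, expanding |S_ab|^2 gives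
       |S_ab|^2 = q; the triangle inequality concludes. *)

Lemma norm1_of_expr (x : algC) n : (0 < n)%N -> `|x ^+ n| = 1 -> `|x| = 1.
Proof. by move=> n0 xn; apply/eqP; rewrite -(pexpr_eq1 n0) // -normrX xn. Qed.

Lemma norm_prim_expr (w : algC) n k : n.-primitive_root w -> `|w ^+ k| = 1.
Proof.
move=> pw; have w1 : `|w| = 1.
  by apply: (norm1_of_expr (prim_order_gt0 pw)); rewrite prim_expr_order ?normr1.
by rewrite normrX w1 expr1n.
Qed.

Lemma mul_conj_norm1 (x : algC) : `|x| = 1 -> x * x^* = 1.
Proof. by move=> nx; rewrite -normCK nx expr1n. Qed.

Lemma conj_prim_root (eps : algC) t : t.-primitive_root eps -> eps^* = eps ^+ t.-1.
Proof.
move=> pe; have t0 := prim_order_gt0 pe.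
have conj_inv := mul_conj_norm1 (norm_prim_expr 1 pe); rewrite expr1 in conj_inv.
have pred_inv : eps * eps ^+ t.-1 = 1 by rewrite -exprS prednK // prim_expr_order.
have eps0 : eps != 0 by rewrite (prim_root_eq0 pe) -lt0n.
by apply: (mulfI eps0); rewrite conj_inv pred_inv.
Qed.

Lemma sum_expr_unity (x : algC) t : x ^+ t = 1 ->
  \sum_(j < t) x ^+ j = if x == 1 then t%:R else 0.
Proof.
move=> xt; have [->|x1] := eqVneq x 1.
  by rewrite (eq_bigr (fun _ => 1)) ?sumr_const ?card_ord // => j _; rewrite expr1n.
have : (x - 1) * \sum_(j < t) x ^+ j = 0 by rewrite -subrX1 xt subrr.
by move/eqP; rewrite mulf_eq0 subr_eq0 (negbTE x1) => /eqP.
Qed.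

Lemma sqr_norm_subr1 (u : algC) : `|u| = 1 -> `|u - 1| ^+ 2 = 2 - 2 * 'Re u.
Proof.
move=> nu; rewrite normCK rmorphB rmorph1 /= ReE.
rewrite mulrBl !mulrBr (mul_conj_norm1 nu) mulr1 mul1r.
rewrite [2 * _]mulrC -mulrA mulVf ?mulr1 ?pnatr_eq0 //; ring.
Qed.

(* Orthogonality of the characters j |-> eps^(k j) of Z/t: the exponent
   k + (t-1) l represents k - l modulo t. *)
Lemma prim_expr_diff_eq1 (eps : algC) t k l :
  t.-primitive_root eps -> (k < t)%N -> (l < t)%N ->
  (eps ^+ (k + t.-1 * l) == 1) = (k == l).
Proof.
move=> pe kt lt; have t0 := prim_order_gt0 pe.
rewrite -(expr0 eps) (eq_prim_root_expr pe) mod0n.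
have e : (k + t.-1 * l + l = l * t + k)%N.
  by rewrite -[in RHS](prednK t0) mulnS [(l * _)%N]mulnC; lia.
apply/idP/eqP => [/eqP h|->]; last first.
  by rewrite -[X in (X + _)%N]mul1n -mulnDl add1n prednK // modnMr.
have : (k + t.-1 * l + l = l %[mod t])%N by rewrite -modnDml h.
by rewrite e modnMDl !modn_small.
Qed.

Lemma parseval_roots (z0 eps : algC) t : t.-primitive_root eps -> `|z0| = 1 ->
  \sum_(j < t) `|\sum_(k < t) (z0 * eps ^+ j) ^+ k| ^+ 2 = (t * t)%:R.
Proof.
move=> pe nz0; have ce := conj_prim_root pe; have et := prim_expr_order pe.
have term j k l : (z0 * eps ^+ j) ^+ k * ((z0 * eps ^+ j) ^+ l)^* =
    z0 ^+ k * z0^* ^+ l * (eps ^+ (k + t.-1 * l)) ^+ j.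
  rewrite rmorphXn rmorphM rmorphXn /= ce !exprMn -!exprM.
  rewrite mulnDl exprD [(j * k)%N]mulnC [(j * l)%N]mulnC mulnA; ring.
have inner (k l : 'I_t) : \sum_(j < t) z0 ^+ k * z0^* ^+ l * eps ^+ (k + t.-1 * l) ^+ j
    = z0 ^+ k * z0^* ^+ l * (if k == l then t%:R else 0).
  rewrite -mulr_sumr sum_expr_unity; last by rewrite exprAC et expr1n.
  by rewrite prim_expr_diff_eq1.
transitivity (\sum_(j < t) \sum_(k < t) \sum_(l < t)
   z0 ^+ k * z0^* ^+ l * (eps ^+ (k + t.-1 * l)) ^+ j).
  apply: eq_bigr => j _; rewrite normCK rmorph_sum mulr_suml; apply: eq_bigr => k _.
  by rewrite mulr_sumr; apply: eq_bigr => l _; rewrite term.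
rewrite exchange_big /=; under eq_bigr => k _ do rewrite exchange_big /=.
transitivity (\sum_(k < t) (t%:R : algC)); last by rewrite sumr_const card_ord natrM mulr_natl.
apply: eq_bigr => k _.
rewrite (bigD1 k) //= inner eqxx big1 ?addr0 => [|l lk]; last first.
  by rewrite inner eq_sym (negbTE lk) mulr0.
by rewrite -exprMn mul_conj_norm1 // expr1n mul1r.
Qed.

(* If u^s = y and u lies no closer to 1 than y on the unit circle, then the
   geometric sum 1 + u + ... + u^(s-1) = (y - 1)/(u - 1) has modulus <= 1. *)
Lemma geom_sum_norm_le1 (u y : algC) s : `|u| = 1 -> u ^+ s = y -> y != 1 ->
  'Re u <= 'Re y -> `|\sum_(k < s) u ^+ k| ^+ 2 <= 1.
Proof.
move=> nu uy y1 Reuy; have ny : `|y| = 1 by rewrite -uy normrX nu expr1n.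
have e : `|u - 1| ^+ 2 * `|\sum_(k < s) u ^+ k| ^+ 2 = `|y - 1| ^+ 2.
  by rewrite -exprMn -normrM -subrX1 uy.
have y1_gt0 : 0 < `|y - 1| ^+ 2 by rewrite exprn_gt0 // normr_gt0 subr_eq0.
have le_yu : `|y - 1| ^+ 2 <= `|u - 1| ^+ 2.
  by rewrite !sqr_norm_subr1 // lerD2l lerN2 ler_pM2l ?ltr0n.
by rewrite -(ler_pM2l (lt_le_trans y1_gt0 le_yu)) mulr1 e.
Qed.

(* Every point y != 1 of the unit circle has an s-th root (s > 1) strictly
   closer to 1: otherwise all the s-th roots u_j would give geometric sums of
   modulus <= 1, contradicting the Parseval identity sum_j |.|^2 = s^2. *)
Lemma exists_root_Re_gt (y : algC) s : (1 < s)%N -> `|y| = 1 -> y != 1 ->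
  exists2 z, z ^+ s = y & 'Re y < 'Re z.
Proof.
move=> s1 ny y1; have s0 : (0 < s)%N by apply: ltnW.
have [eps pe] := C_prim_root_exists s0; have es := prim_expr_order pe.
set z0 := s.-root y; have z0s : z0 ^+ s = y := rootCK s0 y.
have nz0 : `|z0| = 1 by apply: (norm1_of_expr s0); rewrite z0s ny.
have [/existsP [j lt_y_j]|/existsPn le_j_y] :=
  boolP [exists j : 'I_s, 'Re y < 'Re (z0 * eps ^+ j)].
  by exists (z0 * eps ^+ j) => //; rewrite exprMn z0s exprAC es expr1n mulr1.
have le1 (j : 'I_s) : `|\sum_(k < s) (z0 * eps ^+ j) ^+ k| ^+ 2 <= 1.
  apply: geom_sum_norm_le1 y1 _.
  - by rewrite normrM nz0 (norm_prim_expr _ pe) mulr1.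
  - by rewrite exprMn z0s exprAC es expr1n mulr1.
  - by rewrite real_leNgt ?Creal_Re ?le_j_y.
have : \sum_(j < s) `|\sum_(k < s) (z0 * eps ^+ j) ^+ k| ^+ 2 <= \sum_(j < s) 1.
  by apply: ler_sum => j _; apply: le1.
rewrite parseval_roots // sumr_const card_ord ler_nat.
by move: s1; clear; nia.
Qed.

(* omega N = (N.-root (-1))^2 is a primitive N-th root of unity: N.-root (-1)
   has the largest real part among the N-th roots of -1, so it cannot be a
   root of -1 of any smaller order m | N, by exists_root_Re_gt. *)
Lemma omega_prim N : (1 < N)%N -> N.-primitive_root (omega N).
Proof.
move=> N1; have N0 : (0 < N)%N by apply: ltnW.
set y : algC := N.-root (-1); have yN : y ^+ N = -1 := rootCK N0 (-1).
have ny : `|y| = 1 by apply: (norm1_of_expr N0); rewrite yN normrN1.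
have y_Re_max z : z ^+ N = -1 -> 'Re z <= 'Re y.
  move=> zN; have [Im_ge0|Im_neg] := boolP (0 <= 'Im z); first exact: rootC_Re_max.
  rewrite -Re_conj; apply: (rootC_Re_max N0); first by rewrite -rmorphXn zN rmorphN1.
  by rewrite Im_conj oppr_ge0 ltW // real_ltNge ?Creal_Im.
have omegaN : omega N ^+ N = 1 by rewrite -exprM mulnC exprM yN sqrrN expr1n.
have [m pm dvd_mN] := prim_order_exists N0 omegaN.
have [eq_mN|neq_mN] := eqVneq m N; first by move: pm; rewrite eq_mN.
exfalso.
have m0 := prim_order_gt0 pm; have Nm : N = (N %/ m * m)%N by rewrite divnK.
have s1 : (1 < N %/ m)%N.
  by rewrite ltn_divRL // mul1n ltn_neqAle neq_mN dvdn_leq.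
have neq_1N1 : (1 : algC) != -1 by rewrite -subr_eq0 opprK (pnatr_eq0 _ 2).
have : (y ^+ m) ^+ 2 = 1 by rewrite -exprM mulnC exprM (prim_expr_order pm).
move/eqP; rewrite sqrf_eq1 => /orP [/eqP ym|/eqP ym].
  by move: yN; rewrite Nm mulnC exprM ym expr1n => /eqP; rewrite (negbTE neq_1N1).
have y1 : y != 1 by apply: contra_eq_neq yN => ->; rewrite expr1n.
have [z zy lt_yz] := exists_root_Re_gt s1 ny y1.
have zN : z ^+ N = -1 by rewrite Nm exprM zy ym.
by move: (y_Re_max z zN); rewrite real_leNgt ?Creal_Re // lt_yz.
Qed.

Lemma expf_card_pred (F : finFieldType) (x : F) : x != 0 -> x ^+ #|F|.-1 = 1.
Proof.
move=> x0; apply: (mulfI x0); rewrite mulr1 -exprS prednK ?expf_card //.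
by apply/card_gt0P; exists x.
Qed.

Section DiscreteLog.

Variables (F : finFieldType) (g : F).
Hypothesis g_prim : (#|F|.-1).-primitive_root g.

Lemma logg_exp m : logg g (g ^+ m) = (m %% #|F|.-1)%N.
Proof.
have n0 := prim_order_gt0 g_prim; rewrite /logg; case: pickP => [m'|none].
  by rewrite /= (eq_prim_root_expr g_prim) => /eqP <-; rewrite modn_small.
by have := none (Ordinal (ltn_pmod m n0)); rewrite /= (expr_mod _ (prim_expr_order g_prim)) eqxx.
Qed.

Lemma logg_spec x : x != 0 -> (logg g x < #|F|.-1)%N /\ g ^+ logg g x = x.
Proof.
move=> x0; have [i ->] := prim_rootP g_prim (expf_card_pred x0).
by rewrite logg_exp modn_small.
Qed.

Lemma logg_ltn x : x != 0 -> (logg g x < #|F|.-1)%N.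
Proof. by case/logg_spec. Qed.

Lemma expr_logg x : x != 0 -> g ^+ logg g x = x.
Proof. by case/logg_spec. Qed.

End DiscreteLog.

(* It is the summand of <Phi_a, Phi_b> at the row log x. *)
Definition dchar (F : finFieldType) (g : F) (w : algC) (a b : nat) (x : F) : algC :=
  w ^+ (logg g x * a) * (w ^+ (logg g x * b))^*.

Section DiscreteLogCharacter.

Variables (F : finFieldType) (g : F) (w : algC) (a b : nat).
Hypotheses (g_prim : (#|F|.-1).-primitive_root g) (w_prim : (#|F|.-1).-primitive_root w).
Local Notation chi := (dchar g w a b).

Lemma dchar_expg m : chi (g ^+ m) = w ^+ (m * a) * (w ^+ (m * b))^*.
Proof. by rewrite /dchar logg_exp // !exprM (expr_mod _ (prim_expr_order w_prim)). Qed.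

Lemma norm_dchar x : `|chi x| = 1.
Proof. by rewrite normrM norm_conjC !(norm_prim_expr _ w_prim) mulr1. Qed.

Lemma dcharM x y : x != 0 -> y != 0 -> chi (x * y) = chi x * chi y.
Proof.
move=> x0 y0; rewrite -(expr_logg g_prim x0) -(expr_logg g_prim y0) -exprD.
rewrite !dchar_expg !mulnDl !exprD rmorphM /=; ring.
Qed.

Lemma dchar_diag x : a = b -> chi x = 1.
Proof. by move=> <-; rewrite /dchar mul_conj_norm1 ?(norm_prim_expr _ w_prim). Qed.

Lemma dchar_expg_neq1 m :
  ~~ (m * a == m * b %[mod #|F|.-1])%N -> chi (g ^+ m) != 1.
Proof.
rewrite dchar_expg -(eq_prim_root_expr w_prim); apply: contraNneq => e.
have /mul_conj_norm1 wb1 := norm_prim_expr (m * b) w_prim.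
by rewrite -[w ^+ (m * a)]mulr1 -wb1 mulrA mulrAC e mul1r.
Qed.

(* chi is trivial on a subfield K of F as soon as a = b modulo #|K| - 1:
   the logarithm of an element of K^* is a multiple of (#|F|-1)/(#|K|-1). *)
Lemma dchar_subfield (K : finFieldType) (iota : {rmorphism K -> F}) c :
  (a = b %[mod #|K|.-1])%N -> c != 0 -> chi (iota c) = 1.
Proof.
move=> eq_ab c0; have x0 : iota c != 0 by rewrite fmorph_eq0.
set l := logg g (iota c).
have gl : g ^+ (l * #|K|.-1) = 1.
  by rewrite exprM expr_logg // -rmorphXn expf_card_pred // rmorph1.
have wl : (w ^+ l) ^+ #|K|.-1 = 1.
  by apply/eqP; rewrite -exprM -(prim_order_dvd w_prim) (prim_order_dvd g_prim) gl.
rewrite /dchar -/l !exprM -(expr_mod a wl) eq_ab (expr_mod b wl).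
by rewrite mul_conj_norm1 // normrX (norm_prim_expr _ w_prim) expr1n.
Qed.

End DiscreteLogCharacter.

(* A function on F^* that is multiplicative and not identically 1 sums to 0
   over F^*: the sum is invariant under multiplication by f u. *)
Lemma sum_mult_nontrivial (F : finFieldType) (f : F -> algC) (u : F) :
  (forall x y, x != 0 -> y != 0 -> f (x * y) = f x * f y) ->
  u != 0 -> f u != 1 -> \sum_(x | x != 0) f x = 0.
Proof.
move=> fM u0 fu1.
have e : \sum_(x | x != 0) f x = f u * \sum_(x | x != 0) f x.
  rewrite [in LHS](reindex_inj (mulfI u0)) /= mulr_sumr.
  apply: eq_big => [x|x x0]; first by rewrite mulf_eq0 negb_or u0.
  by rewrite fM // (contraNneq _ x0) // => ->; rewrite mulr0.
apply/eqP; move/eqP: e; rewrite -subr_eq0 -{1}[\sum_(x | _) _]mul1r -mulrBl.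
by rewrite mulf_eq0 subr_eq0 eq_sym (negbTE fu1).
Qed.

Lemma predn_sqr q : (q ^ 2).-1 = (q.-1 * q.+1)%N.
Proof. by case: q => // q; rewrite /=; nia. Qed.

Lemma sum_option (T : finType) (h : option T -> algC) :
  \sum_(o : option T) h o = h None + \sum_(t : T) h (Some t).
Proof.
rewrite (bigD1 None) //=; congr (_ + _).
rewrite (reindex_omap Some id) /=; last by case.
by apply: eq_bigl => t; rewrite eqxx.
Qed.

Lemma sum_codom (K F : finFieldType) (iota : {rmorphism K -> F}) (h : F -> algC) :
  \sum_(x | x \in codom iota) h x = \sum_(c : K) h (iota c).
Proof.
rewrite (eq_bigl (mem [set iota c | c in K])); last first.
  by move=> x; apply/codomP/imsetP => [[c ->]|[c _ ->]]; exists c.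
by rewrite big_imset //; move=> a b _ _; apply: fmorph_inj.
Qed.

Section QuadraticExtension.

Variables (K F : finFieldType) (iota : {rmorphism K -> F}) (alpha : F).
Hypotheses (card_F : #|F| = (#|K| ^ 2)%N) (alpha_notK : alpha \notin codom iota).

Lemma subr_alpha_neq0 t : iota t - alpha != 0.
Proof. by rewrite subr_eq0; apply: contraNneq alpha_notK => <-; apply: codom_f. Qed.

Lemma K_alpha_free a b : iota a = alpha * iota b -> b = 0 /\ a = 0.
Proof.
move=> e; have b0 : b = 0.
  apply/eqP; apply: contraNT alpha_notK => b0.
  by rewrite (_ : alpha = iota (a / b)) ?codom_f // fmorph_div /= e mulfK ?fmorph_eq0.
by move: e; rewrite b0 rmorph0 mulr0 => /eqP; rewrite fmorph_eq0 => /eqP.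
Qed.

(* Representatives 1 and t - alpha (t in K) of the q + 1 cosets of K^* in F^*. *)
Definition coset_rep (o : option K) : F := if o is Some t then iota t - alpha else 1.

Lemma coset_rep_neq0 o : coset_rep o != 0.
Proof. by case: o => [t|] /=; [apply: subr_alpha_neq0 | apply: oner_neq0]. Qed.

Lemma coset_rep_inj c c' o o' : c != 0 -> c' != 0 ->
  iota c * coset_rep o = iota c' * coset_rep o' -> c = c' /\ o = o'.
Proof.
move=> c0 c'0; case: o => [t|]; case: o' => [t'|] /=; rewrite ?mulr1 => e.
- have [/eqP cc' _] : c - c' = 0 /\ c * t - c' * t' = 0.
    apply: K_alpha_free; rewrite !rmorphB !rmorphM /=.
    transitivity (iota c * (iota t - alpha) - iota c' * (iota t' - alpha)
                  + alpha * (iota c - iota c')); first by ring.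
    by rewrite e subrr add0r.
  move: cc'; rewrite subr_eq0 => /eqP cc'; subst c'; split=> //; congr Some.
  have ic0 : iota c != 0 by rewrite fmorph_eq0.
  by apply: (fmorph_inj iota); apply: (addIr (- alpha)); apply: (mulfI ic0).
- have [] := @K_alpha_free (c * t - c') c; first by rewrite rmorphB rmorphM -e; ring.
  by move/eqP; rewrite (negbTE c0).
- have [] := @K_alpha_free (c' * t' - c) c'; first by rewrite rmorphB rmorphM e; ring.
  by move/eqP; rewrite (negbTE c'0).
- by rewrite (fmorph_inj iota e).
Qed.

(* F^* = K^* . {coset representatives}: every nonzero x is uniquely
   iota c * coset_rep o, by injectivity and counting. *)
Lemma sum_nonzero_cosets (h : F -> algC) :
  \sum_(x | x != 0) h x =
  \sum_(c | c != 0) \sum_(o : option K) h (iota c * coset_rep o).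
Proof.
pose D := setX [set~ (0 : K)] [set: option K].
pose psi (p : K * option K) := iota p.1 * coset_rep p.2.
have psi_inj : {in D &, injective psi}.
  move=> [c o] [c' o']; rewrite !inE /= !andbT /psi /= => c0 c'0.
  by case/coset_rep_inj => // -> ->.
have psiD : psi @: D = [set~ 0].
  apply/eqP; rewrite eqEcard card_in_imset // cardsC1 cardsX cardsC1 cardsT.
  rewrite card_option card_F predn_sqr leqnn andbT.
  apply/subsetP => x /imsetP [[c o]]; rewrite !inE /= andbT => c0 ->.
  by rewrite /psi mulf_neq0 ?fmorph_eq0 ?coset_rep_neq0.
rewrite (eq_bigl (mem [set~ 0])); last by move=> x; rewrite !inE.
rewrite -psiD big_imset //= pair_big /=.
by apply: eq_bigl => -[c o]; rewrite !inE /= andbT.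
Qed.

Lemma sum_notK (h : F -> algC) :
  \sum_(x | x \notin codom iota) h x =
  \sum_(p : K * K | p.1 != p.2) h ((iota p.1 - alpha) / (iota p.2 - alpha)).
Proof.
pose E := [set p : K * K | p.1 != p.2].
pose phi (p : K * K) := (iota p.1 - alpha) / (iota p.2 - alpha).
have phi_inj : {in E &, injective phi}.
  move=> [t s] [t' s']; rewrite !inE /= => ts _ e.
  have e1 : (iota t - alpha) * (iota s' - alpha) = (iota t' - alpha) * (iota s - alpha).
    by rewrite (canRL (divfK (subr_alpha_neq0 s)) e) mulrAC divfK ?subr_alpha_neq0.
  have [st' ts'] : t + s' - t' - s = 0 /\ t * s' - t' * s = 0.
    apply: K_alpha_free; rewrite !rmorphB !rmorphD !rmorphM /=.
    transitivity ((iota t - alpha) * (iota s' - alpha) - (iota t' - alpha) * (iota s - alpha)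
                  + alpha * (iota t + iota s' - iota t' - iota s)); first by ring.
    by rewrite e1 subrr add0r.
  have t'E : t' = t + s' - s by rewrite -[RHS]subr0 -st'; ring.
  have /eqP : (t - s) * (s' - s) = 0 by rewrite -ts' t'E; ring.
  rewrite mulf_eq0 !subr_eq0 (negbTE ts) /= => /eqP ss'.
  by rewrite t'E -ss' addrK.
have phiE : phi @: E = [set x | x \notin codom iota].
  apply/eqP; rewrite eqEcard card_in_imset //; apply/andP; split.
    apply/subsetP => x /imsetP [[t s]]; rewrite !inE /= => ts ->.
    apply/codomP => -[c /(canRL (divfK (subr_alpha_neq0 s))) e].
    have [/eqP c1 /eqP] : 1 - c = 0 /\ t - c * s = 0.
      apply: K_alpha_free; rewrite !rmorphB !rmorphM rmorph1 /=.
      transitivity (iota t - alpha - iota c * (iota s - alpha) + alpha * (1 - iota c));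
        first by ring.
      by rewrite e subrr add0r.
    by move: c1; rewrite subr_eq0 => /eqP <-; rewrite mul1r subr_eq0 (negbTE ts).
  have cardE : #|E| = (#|K| * #|K| - #|K|)%N.
    rewrite -card_prod -(cardsC E).
    have -> : ~: E = [set (t, t) | t : K].
      apply/setP => -[a b]; rewrite !inE /= negbK.
      by apply/eqP/imsetP => [->|[t _ [-> ->]] //]; exists b.
    by rewrite card_imset ?addnK // => a b [].
  have cardnotK : #|[set x | x \notin codom iota]| = (#|F| - #|K|)%N.
    rewrite -(card_codom (fmorph_inj iota)) -(cardC (mem (codom iota))) addKn.
    by apply: eq_card => x; rewrite !inE.
  by rewrite cardE cardnotK card_F.
rewrite (eq_bigl (mem [set x | x \notin codom iota])); last by move=> x; rewrite !inE.
by rewrite -phiE big_imset //=; apply: eq_bigl => p; rewrite !inE.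
Qed.

(* g^(q+1) lies in K^* for any primitive root g of F: it is a (q-1)-th root
   of unity, and the q - 1 elements of K^* already exhaust those roots. *)
Lemma expg_succ_in_subfield (g : F) :
  (#|F|.-1).-primitive_root g -> exists c, iota c = g ^+ #|K|.+1.
Proof.
move=> g_prim; have K1 : (1 < #|K|)%N := card_finNzRing_gt1 K.
case: (pickP (fun c => iota c == g ^+ #|K|.+1)) => [c /eqP|notK]; first by exists c.
pose rs := g ^+ #|K|.+1 :: [seq iota c | c <- enum (predC1 (0 : K))].
have rs_roots : all #|K|.-1.-unity_root rs.
  rewrite /= unity_rootE -exprM mulnC -predn_sqr -card_F (prim_expr_order g_prim) eqxx.
  apply/allP => x /mapP [c]; rewrite mem_enum => c0 ->.
  by rewrite unity_rootE -rmorphXn expf_card_pred // rmorph1.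
have rs_uniq : uniq rs.
  rewrite /= map_inj_uniq ?enum_uniq ?andbT; last exact: fmorph_inj.
  by apply/mapP => -[c _ e]; move: (notK c); rewrite -e eqxx.
have K0 : (0 < #|K|.-1)%N by rewrite -ltnS prednK // ltnW.
have := max_unity_roots K0 rs_roots rs_uniq.
by rewrite /= size_map -cardE cardC1 ltnn.
Qed.

Lemma logg_shift_range (g : F) : (#|F|.-1).-primitive_root g ->
  forall t, (0 < logg g (iota t - alpha)%R < #|F|.-1)%N.
Proof.
move=> g_prim t; rewrite logg_ltn ?subr_alpha_neq0 // andbT lt0n.
apply: contraNneq alpha_notK => log0; apply/codomP; exists (t - 1).
rewrite rmorphB rmorph1 -[1](expr0 g) -log0 expr_logg ?subr_alpha_neq0 //.
by rewrite opprB addrC subrK.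
Qed.

Lemma logg_shift_inj (g : F) : (#|F|.-1).-primitive_root g ->
  injective (fun t => logg g (iota t - alpha)).
Proof.
move=> g_prim t s /(congr1 (GRing.exp g)).
rewrite !expr_logg ?subr_alpha_neq0 // => /addIr; exact: fmorph_inj.
Qed.

Section CharacterSums.

Variable f : F -> algC.
Hypotheses (fM : forall x y, x != 0 -> y != 0 -> f (x * y) = f x * f y)
           (f_norm : forall x, x != 0 -> `|f x| = 1).

Let line_sum := \sum_(t : K) f (iota t - alpha).

(* If f is trivial on K^* but not on F^*, summing f over
   F^* = K^* . {coset representatives} gives (q - 1)(1 + line_sum) = 0. *)
Lemma line_sum_trivial_on_K u : (forall c, c != 0 -> f (iota c) = 1) ->
  u != 0 -> f u != 1 -> 1 + line_sum = 0.
Proof.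
move=> fK u0 fu1; have := sum_mult_nontrivial fM u0 fu1.
rewrite sum_nonzero_cosets (eq_bigr (fun _ => 1 + line_sum)) => [|c c0].
  rewrite sumr_const => /eqP; rewrite mulrn_eq0 => /orP [|/eqP //].
  by move/eqP/card0_eq/(_ 1); rewrite unfold_in oner_eq0.
rewrite sum_option /= mulr1 fK //; congr (_ + _); apply: eq_bigr => t _.
by rewrite fM ?fmorph_eq0 ?subr_alpha_neq0 // fK // mul1r.
Qed.

(* If f is nontrivial on K^*, then it sums to 0 over F \ K; expanding
   |line_sum|^2 over pairs (t, s) and using sum_notK gives |line_sum|^2 = q. *)
Lemma line_sum_norm c : c != 0 -> f (iota c) != 1 -> `|line_sum| = sqrtC #|K|%:R.
Proof.
move=> c0 fc1; have ic0 : iota c != 0 by rewrite fmorph_eq0.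
have fK0 : \sum_(c | c != 0) f (iota c) = 0.
  by apply: (sum_mult_nontrivial _ c0) => // x y x0 y0; rewrite rmorphM fM ?fmorph_eq0.
have fF0 : \sum_(x | x != 0) f x = 0 := sum_mult_nontrivial fM ic0 fc1.
have f_notK : \sum_(x | x \notin codom iota) f x = 0.
  have sum_F : \sum_x f x = f 0 by rewrite (bigD1 0) //= fF0 addr0.
  have sum_K : \sum_(x | x \in codom iota) f x = f 0.
    by rewrite sum_codom (bigD1 0) //= fK0 rmorph0 addr0.
  apply: (addrI (f 0)); rewrite addr0 -[RHS]sum_F [RHS](bigID (mem (codom iota))) /=.
  by rewrite sum_K.
have f_div x y : x != 0 -> y != 0 -> f (x / y) = f x * (f y)^*.
  move=> x0 y0; have xy0 : x / y != 0 by rewrite mulf_neq0 ?invr_eq0.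
  by rewrite -[in RHS](divfK y0 x) (fM xy0 y0) -mulrA mul_conj_norm1 ?f_norm ?mulr1.
have : line_sum * line_sum^* = #|K|%:R.
  rewrite rmorph_sum mulr_suml (eq_bigr (fun t => 1 + \sum_(s | s != t)
      f ((iota t - alpha) / (iota s - alpha)))) => [|t _]; last first.
    rewrite mulr_sumr (bigD1 t) //= mul_conj_norm1 ?f_norm ?subr_alpha_neq0 //.
    by congr (_ + _); apply: eq_bigr => s _; rewrite f_div ?subr_alpha_neq0.
  rewrite big_split sumr_const /= pair_big_dep /=.
  rewrite (eq_bigl (fun p : K * K => p.1 != p.2)) => [|[t s] /=]; last by rewrite eq_sym.
  by rewrite -sum_notK f_notK addr0.
by rewrite -normCK => <-; rewrite exprCK.
Qed.

End CharacterSums.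

End QuadraticExtension.

(* Residues modulo (q-1)(q+1) of the column indices j + m (q-1) of the blocks
   T_j: they are pairwise distinct, and after scaling by q + 1 only the block
   index j survives. *)
Lemma T_index_mod q j1 j2 m1 m2 : (j1 < q.-1)%N -> (j2 < q.-1)%N ->
  (m1 < q.+1)%N -> (m2 < q.+1)%N ->
  (j1 + m1 * q.-1 == j2 + m2 * q.-1 %[mod q.-1 * q.+1])%N = (j1 == j2) && (m1 == m2).
Proof.
move=> j1q j2q m1q m2q.
have small j m : (j < q.-1)%N -> (m < q.+1)%N -> (j + m * q.-1 < q.-1 * q.+1)%N.
  move=> jq mq; apply: (@leq_trans (m.+1 * q.-1)); first by rewrite mulSn ltn_add2r.
  by rewrite [(m.+1 * _)%N]mulnC leq_mul2l mq orbT.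
rewrite !modn_small ?small //; apply/eqP/andP => [e|[/eqP-> /eqP->] //].
have rem j m : (j < q.-1)%N -> ((j + m * q.-1) %% q.-1 = j)%N.
  by move=> jq; rewrite addnC modnMDl modn_small.
have quo j m : (j < q.-1)%N -> ((j + m * q.-1) %/ q.-1 = m)%N.
  by move=> jq; rewrite addnC divnMDl ?divn_small ?addn0 //; apply: leq_ltn_trans jq.
by split; apply/eqP; [rewrite -(rem j1 m1) // e rem | rewrite -(quo j1 m1) // e quo].
Qed.

Lemma T_index_mod_scaled q j1 j2 m1 m2 : (j1 < q.-1)%N -> (j2 < q.-1)%N ->
  (q.+1 * (j1 + m1 * q.-1) == q.+1 * (j2 + m2 * q.-1) %[mod q.-1 * q.+1])%N = (j1 == j2).
Proof.
move=> j1q j2q; rewrite ![(q.+1 * _)%N]mulnC -!muln_modl // eqn_pmul2r //.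
by rewrite ![(_ + _ * _)%N]addnC !modnMDl !modn_small.
Qed.

Lemma ip_rows N q (S : pred nat) k1 k2 :
  ip N q S k1 k2 = (q.+1)%:R^-1 *
     \sum_(r < N | S r) omega N ^+ (r * k1) * (omega N ^+ (r * k2))^*.
Proof.
rewrite /ip mulr_sumr; apply: eq_bigr => r _; rewrite /Phi /fourier rmorphM /=.
rewrite geC0_conj ?invr_ge0 ?sqrtC_ge0 ?ler0n //.
rewrite -[in RHS](sqrtCK (q.+1)%:R) expr2 invfM; ring.
Qed.

Lemma sum_rows (T : finType) N (L : T -> nat) (E : nat -> algC) :
  (0 < N)%N -> injective L -> (forall t, 0 < L t < N)%N ->
  \sum_(r < N | ((r : nat) == 0)%N || ((r : nat) \in [seq L t | t <- enum T])) E r =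
  E 0%N + \sum_(t : T) E (L t).
Proof.
move=> N0 L_inj L_range; rewrite (bigD1 (Ordinal N0)) //=; congr (_ + _).
have L_lt t : (L t < N)%N by case/andP: (L_range t).
pose Lo t := Ordinal (L_lt t).
rewrite (eq_bigl (mem [set Lo t | t in T])) ?big_imset // => [a b _ _ [/L_inj] //|r].
rewrite -val_eqE /=; apply/andP/imsetP => [[/orP[/eqP r0|/mapP[t _ rt]] rn0]|[t _ ->]].
- by rewrite r0 in rn0.
- by exists t => //; apply: val_inj.
by rewrite /= map_f ?mem_enum ?orbT // -lt0n; case/andP: (L_range t).
Qed.

Lemma shifted_norm_bounds (s : algC) n : `|s| = sqrtC n%:R ->
  (sqrtC n%:R - 1) / (n.+1)%:R <= `|(n.+1)%:R^-1 * (1 + s)| <= (sqrtC n%:R + 1) / (n.+1)%:R.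
Proof.
move=> ns; rewrite normrM normfV normr_nat [_^-1 * _]mulrC [1 + s]addrC -ns.
rewrite !ler_pM2r ?invr_gt0 ?ltr0n //.
by rewrite -[X in _ - X <= _]normr1 -[X in _ <= _ + X]normr1 lerB_normD ler_normD.
Qed.

Definition frame_rows (K F : finFieldType) (iota : {rmorphism K -> F}) (alpha g : F) :
  pred nat := fun r => (r == 0)%N || (r \in [seq logg g (iota t - alpha) | t <- enum K]).

Section Frame.

Variables (K F : finFieldType) (iota : {rmorphism K -> F}) (alpha g : F).
Hypotheses (card_F : #|F| = (#|K| ^ 2)%N) (alpha_notK : alpha \notin codom iota)
           (g_prim : (#|F|.-1).-primitive_root g).

Local Notation N := #|F|.-1.
Local Notation w := (omega #|F|.-1).
Local Notation rows := (frame_rows iota alpha g).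

Let K_gt1 : (1 < #|K|)%N := card_finNzRing_gt1 K.

Let N_gt1 : (1 < N)%N.
Proof. by rewrite card_F predn_sqr; move: K_gt1; clear; nia. Qed.

Let w_prim : N.-primitive_root w := omega_prim N_gt1.

Lemma ip_frame k1 k2 : ip N #|K| rows k1 k2 =
  (#|K|.+1)%:R^-1 * (1 + \sum_(t : K) dchar g w k1 k2 (iota t - alpha)).
Proof.
rewrite ip_rows /frame_rows.
rewrite (sum_rows (fun r => w ^+ (r * k1) * (w ^+ (r * k2))^*) (ltnW N_gt1)
                  (logg_shift_inj alpha_notK g_prim) (logg_shift_range alpha_notK g_prim)).
by rewrite !mul0n expr0 rmorph1 mulr1.
Qed.

Lemma card_frame_rows : #|[pred r : 'I_N | rows r]| = #|K|.+1.
Proof.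
have := sum_rows (fun _ => 1 : algC) (ltnW N_gt1) (logg_shift_inj alpha_notK g_prim)
  (logg_shift_range alpha_notK g_prim).
by rewrite !sumr_const addrC natr1 => /eqP; rewrite eqr_nat => /eqP.
Qed.

Lemma frame_block_orthonormal j k1 k2 : (j < #|K|.-1)%N ->
  T #|K| j k1 -> T #|K| j k2 -> ip N #|K| rows k1 k2 = (k1 == k2)%:R.
Proof.
move=> jK /existsP [m1 /eqP ->] /existsP [m2 /eqP ->].
have eq_mod : (j + m1 * #|K|.-1 = j + m2 * #|K|.-1 %[mod #|K|.-1])%N.
  by rewrite !(addnC j) !modnMDl.
rewrite ip_frame eqn_add2l eqn_pmul2r; last exact: leq_ltn_trans (leq0n j) jK.
have [<-|neq_m] := eqVneq (m1 : nat) m2.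
  rewrite (eq_bigr (fun _ => 1)) => [|t _]; last exact: dchar_diag.
  by rewrite sumr_const addrC natr1 mulVf ?pnatr_eq0.
have chiM := dcharM (j + m1 * #|K|.-1) (j + m2 * #|K|.-1) g_prim w_prim.
rewrite (line_sum_trivial_on_K card_F alpha_notK chiM (u := g)) ?mulr0 //.
- by move=> c; apply: dchar_subfield.
- by rewrite (prim_root_eq0 g_prim) -lt0n (prim_order_gt0 g_prim).
rewrite -[g]expr1 dchar_expg_neq1 // !mul1n card_F predn_sqr T_index_mod ?ltn_ord //.
by rewrite eqxx.
Qed.

Lemma frame_cross_bounds j1 j2 k1 k2 :
  (j1 < #|K|.-1)%N -> (j2 < #|K|.-1)%N -> j1 != j2 -> T #|K| j1 k1 -> T #|K| j2 k2 ->
  (sqrtC #|K|%:R - 1) / (#|K|.+1)%:R <= `|ip N #|K| rows k1 k2|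
  <= (sqrtC #|K|%:R + 1) / (#|K|.+1)%:R.
Proof.
move=> j1K j2K j12 /existsP [m1 /eqP ->] /existsP [m2 /eqP ->].
rewrite ip_frame; apply: shifted_norm_bounds.
have [c c_gq] := expg_succ_in_subfield iota card_F g_prim.
have c0 : c != 0.
  by rewrite -(fmorph_eq0 iota) c_gq expf_eq0 (prim_root_eq0 g_prim) -lt0n (prim_order_gt0 g_prim).
apply: (line_sum_norm card_F alpha_notK (dcharM _ _ g_prim w_prim) _ c0).
  by move=> x _; apply: norm_dchar.
by rewrite c_gq dchar_expg_neq1 // card_F predn_sqr T_index_mod_scaled.
Qed.

End Frame.

Unset Implicit Arguments.

Theorem theorem3p3 (K F : finFieldType) (iota : {rmorphism K -> F}) (q : nat)
  (alpha g : F) :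
  #|K| = q ->
  #|F| = (q ^ 2)%N ->
  alpha \notin codom iota ->
  (#|F|.-1).-primitive_root g ->
  let N := (q ^ 2).-1 in
  let M := [seq logg g (iota t - alpha) | t <- enum K] in
  let S : pred nat := fun r => (r == 0) || (r \in M) in
  (forall j : nat, (j < q.-1)%N ->
     #|[pred r : 'I_N | S r]| = q.+1 /\
     (forall k1 k2 : nat, T q j k1 -> T q j k2 ->
        ip N q S k1 k2 = (k1 == k2)%:R))
  /\
  (forall j1 j2 k1 k2 : nat, (j1 < q.-1)%N -> (j2 < q.-1)%N -> j1 != j2 ->
     T q j1 k1 -> T q j2 k2 ->
     (sqrtC q%:R - 1) / (q.+1)%:R <= `|ip N q S k1 k2|
     <= (sqrtC q%:R + 1) / (q.+1)%:R).
Proof.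
move=> card_K card_F alpha_notK g_prim N M S; subst q.
rewrite /N -card_F; split=> [j jK|].
  split; first exact: card_frame_rows.
  by move=> k1 k2; apply: frame_block_orthonormal.
by move=> j1 j2 k1 k2; apply: frame_cross_bounds.
Qed.
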